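(* Let $a_1,a_2,k_1,k_2>0$ and $b_1,b_2\ge0$ be constants and consider the batch culture system $$\dot x_1=\left(\frac{a_1s}{k_1+s}-b_1\right)x_1,\quad \dot x_2=\left(\frac{a_2s}{k_2+s}-b_2\right)x_2,\quad \dot s=-\frac{a_1s}{k_1+s}x_1-\frac{a_2s}{k_2+s}x_2,\quad (x_1,x_2,s)\in(0,+\infty)^3,$$ with output $y=s$. For every $r>0$: if this system is not strongly observable in time $r$, then $a_1=a_2$, $b_1=b_2$ and $k_1=k_2$.
   Context: Solutions starting in $(0,+\infty)^3$ exist, are unique and remain in $(0,+\infty)^3$ for all $t\ge0$. The (input-free) system is strongly observable in time $r>0$ if for any two distinct initial states in $(0,+\infty)^3$, the $s$-components $s(t),\bar s(t)$ of the corresponding solutions satisfy $\max_{t\in[0,r]}|s(t)-\bar s(t)|>0$. *)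

From Stdlib Require Import Reals.
From Coquelicot Require Import Coquelicot.
Open Scope R_scope.

Definition monod (a k s : R) : R := a * s / (k + s).

Definition batch_solution (a1 a2 k1 k2 b1 b2 : R) (x1 x2 s : R -> R) : Prop :=
  (forall t, 0 <= t -> 0 < x1 t /\ 0 < x2 t /\ 0 < s t) /\
  (forall t, 0 < t ->
     is_derive x1 t ((monod a1 k1 (s t) - b1) * x1 t) /\
     is_derive x2 t ((monod a2 k2 (s t) - b2) * x2 t) /\
     is_derive s t (- monod a1 k1 (s t) * x1 t - monod a2 k2 (s t) * x2 t)) /\
  filterlim x1 (at_right 0) (locally (x1 0)) /\
  filterlim x2 (at_right 0) (locally (x2 0)) /\
  filterlim s (at_right 0) (locally (s 0)).

(* Strong observability in time r (output y = s): any two solutions with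
   distinct initial states have s-components differing somewhere on [0,r]
   (i.e. max_{t in [0,r]} |s(t) - sbar(t)| > 0). *)
Definition strongly_observable (a1 a2 k1 k2 b1 b2 r : R) : Prop :=
  forall x1 x2 s y1 y2 sb : R -> R,
    batch_solution a1 a2 k1 k2 b1 b2 x1 x2 s ->
    batch_solution a1 a2 k1 k2 b1 b2 y1 y2 sb ->
    (x1 0, x2 0, s 0) <> (y1 0, y2 0, sb 0) ->
    exists t, 0 <= t <= r /\ Rabs (s t - sb t) > 0.

From Stdlib Require Import Reals Lra Psatz Classical.
From Coquelicot Require Import Coquelicot.
Open Scope R_scope.

(* Suppose two solutions have the same substrate s on [0, r].  Then their
   derivatives of s agree, so m1(s)(x1 - y1) + m2(s)(x2 - y2) = 0 with m_i the
   Monod rates.  Distinct initial states force x1 - y1 <> 0 near 0, and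
   differentiating this relation once and eliminating x2 - y2 gives
   (k1 - k2) s' = P(s) for an explicit quadratic P ([mismatch_poly]).  As
   s' < 0, s is strictly monotone, so a polynomial identity in s(t) holding on
   an interval is an identity of coefficients.  If k1 = k2 this yields a1 = a2
   and b1 = b2.  Otherwise differentiating once more yields a cubic identity
   ([mismatch_cubic]) forcing a1 = a2 and b1 = b2 = 0; then
   P(s) = a1 (k1 - k2) s, i.e. s' = a1 s > 0, which is absurd. *)

Lemma is_derive_plus_R (f g : R -> R) x df dg :
  is_derive f x df -> is_derive g x dg ->
  is_derive (fun t => f t + g t) x (df + dg).
Proof. apply (is_derive_plus f g). Qed.

Lemma is_derive_minus_R (f g : R -> R) x df dg :
  is_derive f x df -> is_derive g x dg ->
  is_derive (fun t => f t - g t) x (df - dg).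
Proof. apply (is_derive_minus f g). Qed.

Lemma is_derive_mult_R (f g : R -> R) x df dg :
  is_derive f x df -> is_derive g x dg ->
  is_derive (fun t => f t * g t) x (df * g x + f x * dg).
Proof. intros Hf Hg. apply (is_derive_mult f g); auto. intros; apply Rmult_comm. Qed.

Lemma is_derive_comp_R (f g : R -> R) x df dg :
  is_derive f (g x) df -> is_derive g x dg ->
  is_derive (fun t => f (g t)) x (df * dg).
Proof. intros Hf Hg. rewrite Rmult_comm. now apply (is_derive_comp f g). Qed.

Lemma is_derive_zero (t : R) : is_derive (fun _ => 0) t 0.
Proof. apply (is_derive_const (K := R_AbsRing) 0). Qed.

Lemma is_derive_eq_on_interval (f g : R -> R) l u t df dg :
  (forall y, l < y < u -> f y = g y) -> l < t < u ->
  is_derive f t df -> is_derive g t dg -> df = dg.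
Proof.
  intros Hfg Ht Hf Hg.
  apply is_derive_unique in Hg. rewrite <- Hg. symmetry.
  apply is_derive_unique, (is_derive_ext_loc f); auto.
  apply (filter_imp (fun y => l < y < u)); [auto|].
  apply (locally_interval _ t l u); simpl; tauto.
Qed.

Lemma deriv_zero_along_curve (F F' s v : R -> R) l u :
  (forall x, is_derive F x (F' x)) ->
  (forall t, l < t < u -> is_derive s t (v t) /\ v t <> 0) ->
  (forall t, l < t < u -> F (s t) = 0) ->
  forall t, l < t < u -> F' (s t) = 0.
Proof.
  intros HF Hs H0 t Ht. destruct (Hs t Ht) as [Hd Hv].
  assert (E : F' (s t) * v t = 0).
  { apply (is_derive_eq_on_interval (fun y => F (s y)) (fun _ => 0) l u t); auto.
    - now apply is_derive_comp_R.
    - apply is_derive_zero. }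
  apply Rmult_integral in E. tauto.
Qed.

Lemma cubic_zero_along_curve (s v : R -> R) l u c0 c1 c2 c3 : l < u ->
  (forall t, l < t < u -> is_derive s t (v t) /\ v t <> 0) ->
  (forall t, l < t < u -> c0 + c1 * s t + c2 * s t ^ 2 + c3 * s t ^ 3 = 0) ->
  c0 = 0 /\ c1 = 0 /\ c2 = 0 /\ c3 = 0.
Proof.
  intros Hlu Hs H0.
  assert (H1 := deriv_zero_along_curve
     (fun x => c0 + c1 * x + c2 * x ^ 2 + c3 * x ^ 3)
     (fun x => c1 + 2 * c2 * x + 3 * c3 * x ^ 2) s v l u
     ltac:(intros; auto_derive; auto; ring) Hs H0).
  assert (H2 := deriv_zero_along_curve
     (fun x => c1 + 2 * c2 * x + 3 * c3 * x ^ 2)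
     (fun x => 2 * c2 + 6 * c3 * x) s v l u
     ltac:(intros; auto_derive; auto; ring) Hs H1).
  assert (H3 := deriv_zero_along_curve
     (fun x => 2 * c2 + 6 * c3 * x) (fun _ => 6 * c3) s v l u
     ltac:(intros; auto_derive; auto; ring) Hs H2).
  assert (Ht : l < (l + u) / 2 < u) by lra.
  specialize (H0 _ Ht); specialize (H1 _ Ht);
    specialize (H2 _ Ht); specialize (H3 _ Ht); simpl in *.
  assert (c3 = 0) by lra. subst c3.
  assert (c2 = 0) by lra. subst c2.
  assert (c1 = 0) by lra. subst c1. lra.
Qed.

Lemma at_right0_close (f : R -> R) eps : 0 < eps ->
  filterlim f (at_right 0) (locally (f 0)) ->
  exists d, 0 < d /\ forall t, 0 < t < d -> Rabs (f t - f 0) < eps.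
Proof.
  intros He Hf. apply filterlim_locally with (eps := mkposreal eps He) in Hf.
  destruct Hf as [d Hd]. exists d. split; [apply cond_pos|].
  intros t Ht. apply (Hd t); [|lra].
  unfold ball; simpl. unfold AbsRing_ball, abs, minus, plus, opp; simpl.
  rewrite Ropp_0, Rplus_0_r, Rabs_right; lra.
Qed.

Lemma at_right0_neq (f g : R -> R) :
  filterlim f (at_right 0) (locally (f 0)) ->
  filterlim g (at_right 0) (locally (g 0)) -> f 0 <> g 0 ->
  exists d, 0 < d /\ forall t, 0 < t < d -> f t <> g t.
Proof.
  intros Hf Hg Hne.
  assert (He : 0 < Rabs (f 0 - g 0) / 2).
  { assert (f 0 - g 0 <> 0) by lra. apply Rabs_pos_lt in H. lra. }
  destruct (at_right0_close f _ He Hf) as [d1 [Hd1 H1]].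
  destruct (at_right0_close g _ He Hg) as [d2 [Hd2 H2]].
  exists (Rmin d1 d2). split; [now apply Rmin_glb_lt|].
  intros t Ht Heq.
  assert (t < d1) by (apply Rlt_le_trans with (Rmin d1 d2); [lra | apply Rmin_l]).
  assert (t < d2) by (apply Rlt_le_trans with (Rmin d1 d2); [lra | apply Rmin_r]).
  specialize (H1 t ltac:(lra)). specialize (H2 t ltac:(lra)). rewrite Heq in H1.
  revert H1 H2 He. unfold Rabs. repeat destruct Rcase_abs; lra.
Qed.

Lemma monod_pos a k x : 0 < a -> 0 < k -> 0 < x -> 0 < monod a k x.
Proof. intros. unfold monod. apply Rdiv_lt_0_compat; nra. Qed.

Lemma is_derive_monod_comp a k (s : R -> R) t ds :
  0 < k -> 0 < s t -> is_derive s t ds ->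
  is_derive (fun t => monod a k (s t)) t (a * k / (k + s t) ^ 2 * ds).
Proof.
  intros Hk Hs Hd. apply (is_derive_comp_R (monod a k) s); auto.
  unfold monod. auto_derive; [lra | field; lra].
Qed.

Section BatchCulture.

Variables a1 a2 k1 k2 b1 b2 : R.
Hypotheses (ha1 : 0 < a1) (ha2 : 0 < a2) (hk1 : 0 < k1) (hk2 : 0 < k2).

Definition substrate_rate (σ X1 X2 : R) : R :=
  - monod a1 k1 σ * X1 - monod a2 k2 σ * X2.

Definition mismatch_poly (σ : R) : R :=
  a2 * σ * (k1 + σ) - a1 * σ * (k2 + σ) + (b1 - b2) * (k1 + σ) * (k2 + σ).

Definition mismatch_poly_deriv (σ : R) : R :=
  a2 * (k1 + σ) + a2 * σ - a1 * (k2 + σ) - a1 * σ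
  + (b1 - b2) * ((k2 + σ) + (k1 + σ)).

Lemma substrate_rate_neg σ X1 X2 :
  0 < σ -> 0 < X1 -> 0 < X2 -> substrate_rate σ X1 X2 < 0.
Proof.
  intros Hs H1 H2. unfold substrate_rate.
  assert (hm1 := monod_pos a1 k1 σ ha1 hk1 Hs).
  assert (hm2 := monod_pos a2 k2 σ ha2 hk2 Hs). nra.
Qed.

(* [S] stands for s', [U1], [U2] for x1 - y1, x2 - y2, and the hypotheses
   are the relation and its derivative. *)
Lemma rate_mismatch_of_relation σ S U1 U2 :
  0 < σ -> U1 <> 0 ->
  monod a1 k1 σ * U1 + monod a2 k2 σ * U2 = 0 ->
  a1 * k1 / (k1 + σ) ^ 2 * S * U1 + monod a1 k1 σ * ((monod a1 k1 σ - b1) * U1)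
  + (a2 * k2 / (k2 + σ) ^ 2 * S * U2 + monod a2 k2 σ * ((monod a2 k2 σ - b2) * U2))
    = 0 ->
  (k1 - k2) * S = mismatch_poly σ.
Proof.
  intros hs hU Hrel Hd.
  assert (hm1 := monod_pos a1 k1 σ ha1 hk1 hs).
  assert (hm2 := monod_pos a2 k2 σ ha2 hk2 hs).
  assert (HU2 : U2 = - (monod a1 k1 σ * U1) / monod a2 k2 σ)
    by (field_simplify_eq; lra).
  rewrite HU2 in Hd.
  assert (E : U1 * monod a1 k1 σ * ((k1 - k2) * S - mismatch_poly σ)
              / ((k1 + σ) * (k2 + σ)) = 0).
  { rewrite <- Hd. unfold monod, mismatch_poly. field. repeat split; lra. }
  assert (0 < (k1 + σ) * (k2 + σ)) by nra.
  unfold Rdiv in E. apply Rmult_integral in E as [E|E].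
  - apply Rmult_integral in E as [E|E]; [|lra].
    apply Rmult_integral in E as [E|E]; lra.
  - apply Rinv_neq_0_compat in E; lra.
Qed.

Definition mismatch_cubic (σ : R) : R :=
  σ * (k1 + σ) * mismatch_poly_deriv σ - k1 * mismatch_poly σ
  - (k1 - k2) * (a1 * σ ^ 2 - b1 * σ * (k1 + σ)).

(* The third hypothesis is the derivative of [(k1 - k2) s' = P(s)]: its left
   side is (k1 - k2) s'' written out with the equations of motion. *)
Lemma mismatch_cubic_of_derivative σ X1 X2 :
  0 < σ -> substrate_rate σ X1 X2 <> 0 ->
  (k1 - k2) * substrate_rate σ X1 X2 = mismatch_poly σ ->
  (k1 - k2) * (- (a1 * k1 / (k1 + σ) ^ 2 * substrate_rate σ X1 X2) * X1
       + - monod a1 k1 σ * ((monod a1 k1 σ - b1) * X1)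
     - (a2 * k2 / (k2 + σ) ^ 2 * substrate_rate σ X1 X2 * X2
       + monod a2 k2 σ * ((monod a2 k2 σ - b2) * X2)))
  = mismatch_poly_deriv σ * substrate_rate σ X1 X2 ->
  mismatch_cubic σ = 0.
Proof.
  intros hs hS E1 Hd. set (S := substrate_rate σ X1 X2) in *.
  assert (H1 : (k1 - k2) * (- (a1 * k1 / (k1 + σ) ^ 2 * S) * X1
       + - monod a1 k1 σ * ((monod a1 k1 σ - b1) * X1)
     - (a2 * k2 / (k2 + σ) ^ 2 * S * X2
       + monod a2 k2 σ * ((monod a2 k2 σ - b2) * X2)))
    = (k1 / (σ * (k1 + σ)) * ((k1 - k2) * S) + (k1 - k2) * (monod a1 k1 σ - b1)) * S
      + (k1 - k2) * monod a2 k2 σ * X2 * ((k1 - k2) * S - mismatch_poly σ)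
        / ((k1 + σ) * (k2 + σ))).
  { unfold S, substrate_rate, monod, mismatch_poly. field. lra. }
  rewrite E1, Hd, Rminus_diag in H1.
  assert (H2 : mismatch_poly_deriv σ
      = k1 / (σ * (k1 + σ)) * mismatch_poly σ + (k1 - k2) * (monod a1 k1 σ - b1)).
  { apply Rmult_eq_reg_r with S; auto. rewrite H1. field. lra. }
  unfold mismatch_cubic. rewrite H2. unfold monod. field. lra.
Qed.

Section SameOutput.

Variables (x1 x2 s y1 y2 sb : R -> R) (r : R).
Hypotheses (Hx : batch_solution a1 a2 k1 k2 b1 b2 x1 x2 s)
  (Hy : batch_solution a1 a2 k1 k2 b1 b2 y1 y2 sb)
  (hr : 0 < r) (Hs : forall t, 0 <= t <= r -> s t = sb t)
  (Hne : (x1 0, x2 0, s 0) <> (y1 0, y2 0, sb 0)).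

Lemma output_relation t : 0 < t < r ->
  monod a1 k1 (s t) * (x1 t - y1 t) + monod a2 k2 (s t) * (x2 t - y2 t) = 0.
Proof.
  intros Ht. destruct Hx as [_ [Dx _]], Hy as [_ [Dy _]].
  destruct (Dx t ltac:(lra)) as [_ [_ D1]], (Dy t ltac:(lra)) as [_ [_ D2]].
  assert (E := is_derive_eq_on_interval s sb 0 r t _ _
                 ltac:(intros; apply Hs; lra) Ht D1 D2).
  rewrite <- (Hs t) in E by lra. lra.
Qed.

Lemma x1_separated_near0 :
  exists d, 0 < d <= r /\ forall t, 0 < t < d -> x1 t - y1 t <> 0.
Proof.
  destruct Hx as [Px [_ [Cx1 [Cx2 _]]]], Hy as [_ [_ [Cy1 [Cy2 _]]]].
  assert (Hmin : forall d, 0 < d -> 0 < Rmin d r <= r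
                   /\ forall t, 0 < t < Rmin d r -> t < d /\ t < r).
  { intros d hd. split; [split; [now apply Rmin_glb_lt | apply Rmin_r]|].
    intros t Ht. split; eapply Rlt_le_trans;
      [| apply Rmin_l | | apply Rmin_r]; apply Ht. }
  destruct (Req_dec (x1 0) (y1 0)) as [E1|E1].
  - assert (E2 : x2 0 <> y2 0).
    { intros E2. apply Hne. rewrite E1, E2, (Hs 0) by lra. reflexivity. }
    destruct (at_right0_neq x2 y2 Cx2 Cy2 E2) as [d [hd Hd]].
    destruct (Hmin d hd) as [Hdr Ht]. exists (Rmin d r). split; [exact Hdr|].
    intros t Htd Hz. destruct (Ht t Htd) as [Htd' Htr].
    assert (Hrel := output_relation t ltac:(lra)). rewrite Hz, Rmult_0_r, Rplus_0_l in Hrel.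
    destruct (Px t ltac:(lra)) as [_ [_ Hst]].
    apply Rmult_integral in Hrel as [Hm|Hm].
    + pose proof (monod_pos a2 k2 (s t) ha2 hk2 Hst). lra.
    + apply (Hd t); lra.
  - destruct (at_right0_neq x1 y1 Cx1 Cy1 E1) as [d [hd Hd]].
    destruct (Hmin d hd) as [Hdr Ht]. exists (Rmin d r). split; [exact Hdr|].
    intros t Htd Hz. apply (Hd t); [split; [lra | apply Ht, Htd] | lra].
Qed.

Lemma rate_mismatch_near0 : exists d, 0 < d /\ forall t, 0 < t < d ->
  (k1 - k2) * substrate_rate (s t) (x1 t) (x2 t) = mismatch_poly (s t).
Proof.
  destruct x1_separated_near0 as [d [[hd hdr] Hu]]. exists d. split; [exact hd|].
  intros t Ht. destruct Hx as [Px [Dx _]], Hy as [_ [Dy _]].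
  destruct (Dx t ltac:(lra)) as [D1 [D2 D3]], (Dy t ltac:(lra)) as [D4 [D5 _]].
  rewrite <- (Hs t) in D4, D5 by lra.
  destruct (Px t ltac:(lra)) as [_ [_ Hst]].
  set (S := substrate_rate (s t) (x1 t) (x2 t)).
  apply (rate_mismatch_of_relation (s t) S (x1 t - y1 t) (x2 t - y2 t)); auto.
  - apply output_relation; lra.
  - apply (is_derive_eq_on_interval (fun t => monod a1 k1 (s t) * (x1 t - y1 t)
             + monod a2 k2 (s t) * (x2 t - y2 t)) (fun _ => 0) 0 r t);
      [intros y Hyr; now apply output_relation | lra | | apply is_derive_zero].
    apply is_derive_plus_R.
    + apply (is_derive_mult_R (fun t => monod a1 k1 (s t)) (fun t => x1 t - y1 t)).
      * now apply is_derive_monod_comp.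
      * rewrite Rmult_minus_distr_l. now apply is_derive_minus_R.
    + apply (is_derive_mult_R (fun t => monod a2 k2 (s t)) (fun t => x2 t - y2 t)).
      * now apply is_derive_monod_comp.
      * rewrite Rmult_minus_distr_l. now apply is_derive_minus_R.
Qed.

End SameOutput.

Section MismatchedRate.

Variables (x1 x2 s : R -> R) (d : R).
Hypotheses (Hx : batch_solution a1 a2 k1 k2 b1 b2 x1 x2 s) (hd : 0 < d)
  (Hmis : forall t, 0 < t < d ->
     (k1 - k2) * substrate_rate (s t) (x1 t) (x2 t) = mismatch_poly (s t)).

Let rate t := substrate_rate (s t) (x1 t) (x2 t).

Lemma substrate_strictly_monotone t : 0 < t < d ->
  is_derive s t (rate t) /\ rate t <> 0.
Proof.
  intros Ht. destruct Hx as [Px [Dx _]].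
  destruct (Px t ltac:(lra)) as [H1 [H2 H3]].
  split; [apply Dx; lra|].
  pose proof (substrate_rate_neg _ _ _ H3 H1 H2). unfold rate. lra.
Qed.

Lemma params_eq_of_k_eq : k1 = k2 -> a1 = a2 /\ b1 = b2.
Proof.
  intros Hk.
  destruct (cubic_zero_along_curve s rate 0 d ((b1 - b2) * k1 * k1)
              (a2 * k1 - a1 * k1 + (b1 - b2) * (k1 + k1)) (a2 - a1 + (b1 - b2)) 0
              hd substrate_strictly_monotone) as [C0 [C1 [C2 _]]].
  { intros t Ht. transitivity (mismatch_poly (s t)).
    - unfold mismatch_poly. rewrite <- Hk. ring.
    - rewrite <- (Hmis t Ht), Hk. ring. }
  assert (b1 = b2) by nra. lra.
Qed.

Lemma mismatch_cubic_near0 t : k1 <> k2 -> 0 < t < d -> mismatch_cubic (s t) = 0.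
Proof.
  intros Hk Ht. destruct Hx as [Px [Dx _]].
  destruct (Dx t ltac:(lra)) as [D1 [D2 D3]].
  destruct (Px t ltac:(lra)) as [_ [_ Hst]].
  destruct (substrate_strictly_monotone t Ht) as [_ Hr].
  apply (mismatch_cubic_of_derivative (s t) (x1 t) (x2 t) Hst Hr (Hmis t Ht)).
  apply (is_derive_eq_on_interval (fun t => (k1 - k2) * rate t)
           (fun t => mismatch_poly (s t)) 0 d t); auto.
  - apply is_derive_scal. unfold rate, substrate_rate. apply is_derive_minus_R.
    + apply (is_derive_mult_R (fun t => - monod a1 k1 (s t)) x1); auto.
      apply (is_derive_opp (fun t => monod a1 k1 (s t))).
      now apply is_derive_monod_comp.
    + apply (is_derive_mult_R (fun t => monod a2 k2 (s t)) x2); auto.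
      now apply is_derive_monod_comp.
  - apply (is_derive_comp_R mismatch_poly s); auto.
    unfold mismatch_poly, mismatch_poly_deriv. auto_derive; auto. ring.
Qed.

Lemma k_neq_absurd : k1 <> k2 -> False.
Proof.
  intros Hk.
  destruct (cubic_zero_along_curve s rate 0 d
      (- k1 * ((b1 - b2) * k1 * k2)) ((k1 - k2) * b1 * k1)
      ((a2 - a1 + (b1 - b2)) * k1 + (a2 * k1 - a1 * k2 + (b1 - b2) * (k1 + k2))
       - (k1 - k2) * a1 + (k1 - k2) * b1)
      (2 * (a2 - a1 + (b1 - b2))) hd substrate_strictly_monotone)
    as [C0 [C1 [C2 C3]]].
  { intros t Ht. rewrite <- (mismatch_cubic_near0 t Hk Ht).
    unfold mismatch_cubic, mismatch_poly, mismatch_poly_deriv. ring. }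
  assert (Hb : b1 = b2).
  { assert (0 < k1 * k1 * k2) by (apply Rmult_lt_0_compat; nra).
    assert ((b1 - b2) * (k1 * k1 * k2) = 0) by lra. nra. }
  assert (Ha : a1 = a2) by lra.
  assert (Hk' : k1 - k2 <> 0) by lra.
  assert (Hb1 : b1 = 0) by (apply (Rmult_eq_reg_l ((k1 - k2) * k1)); nra).
  assert (Ht : 0 < d / 2 < d) by lra.
  destruct Hx as [Px _]. destruct (Px (d / 2) ltac:(lra)) as [H1 [H2 H3]].
  pose proof (substrate_rate_neg _ _ _ H3 H1 H2).
  assert (E := Hmis _ Ht). unfold mismatch_poly in E. rewrite <- Ha, <- Hb, Hb1 in E.
  assert (substrate_rate (s (d / 2)) (x1 (d / 2)) (x2 (d / 2)) = a1 * s (d / 2))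
    by (apply (Rmult_eq_reg_l (k1 - k2)); [rewrite E; ring | exact Hk']).
  nra.
Qed.

End MismatchedRate.

End BatchCulture.

Theorem theorem3p5 (a1 a2 k1 k2 b1 b2 : R) :
  0 < a1 -> 0 < a2 -> 0 < k1 -> 0 < k2 -> 0 <= b1 -> 0 <= b2 ->
  forall r : R, 0 < r ->
  ~ strongly_observable a1 a2 k1 k2 b1 b2 r ->
  a1 = a2 /\ b1 = b2 /\ k1 = k2.
Proof.
  intros ha1 ha2 hk1 hk2 _ _ r hr Hno.
  apply NNPP; intros Hc. apply Hno.
  intros x1 x2 s y1 y2 sb Hx Hy Hne.
  apply NNPP; intros Hnot.
  assert (Hs : forall t, 0 <= t <= r -> s t = sb t).
  { intros t Ht. apply NNPP; intros Hn. apply Hnot. exists t.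
    split; [exact Ht | apply Rabs_pos_lt; lra]. }
  destruct (rate_mismatch_near0 a1 a2 k1 k2 b1 b2 ha1 ha2 hk1 hk2
              x1 x2 s y1 y2 sb r Hx Hy hr Hs Hne) as [d [hd Hmis]].
  destruct (Req_dec k1 k2) as [Hk|Hk].
  - apply Hc. destruct (params_eq_of_k_eq a1 a2 k1 k2 b1 b2 ha1 ha2 hk1 hk2
                          x1 x2 s d Hx hd Hmis Hk).
    auto.
  - exact (k_neq_absurd a1 a2 k1 k2 b1 b2 ha1 ha2 hk1 hk2 x1 x2 s d Hx hd Hmis Hk).
Qed.
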